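(* Let $Q\subseteq\mathbb R[\mathbf X]$ be a quadratic module. Then $\mathcal L(Q)=\mathcal L\big(\sqrt[\mathbb R]{\operatorname{supp}Q}+Q\big)$. In particular, for every ideal $I\subseteq\sqrt[\mathbb R]{\operatorname{supp}Q}$, $\mathcal L(Q)=\mathcal L\big(\sqrt[\mathbb R]{I}+Q\big)$.
   Context: $\mathbb R[\mathbf X]=\mathbb R[X_1,\dots,X_n]$, $\Sigma^2$ sums of squares. A quadratic module is a set $Q$ with $1\in Q$, $Q+Q\subseteq Q$, $\Sigma^2Q\subseteq Q$; $\operatorname{supp}Q=Q\cap(-Q)$ is an ideal; for an ideal $I$, $I+Q$ is again a quadratic module. For a quadratic module $A$, $\mathcal L(A)=\{\sigma\in\mathbb R[\mathbf X]^*:\sigma(a)\ge0\ \forall a\in A\}$. $\sqrt[\mathbb R]{I}=\{p:\exists m\in\mathbb N, s\in\Sigma^2,\ p^{2m}+s\in I\}$. *)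

From HB Require Import structures.
From mathcomp Require Import all_boot all_order all_algebra.
From mathcomp Require Import reals.
From mathcomp Require Import mpoly.

Set Implicit Arguments.
Unset Strict Implicit.
Unset Printing Implicit Defensive.

Import Order.TTheory GRing.Theory Num.Theory.
Local Open Scope ring_scope.

Section Defs.
Variables (R : realType) (n : nat).

Definition pset := {mpoly R[n]} -> Prop.

Definition sos (p : {mpoly R[n]}) : Prop :=
  exists s : seq {mpoly R[n]}, p = \sum_(x <- s) x ^+ 2.

Definition quadratic_module (Q : pset) : Prop :=
  [/\ Q 1,
      (forall p q, Q p -> Q q -> Q (p + q)) &
      (forall s q, sos s -> Q q -> Q (s * q))].

Definition is_ideal (I : pset) : Prop :=
  [/\ I 0,
      (forall p q, I p -> I q -> I (p + q)) &
      (forall r p, I p -> I (r * p))].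

Definition supp (Q : pset) : pset := fun p => Q p /\ Q (- p).

Definition real_radical (I : pset) : pset :=
  fun p => exists (m : nat) (s : {mpoly R[n]}), sos s /\ I (p ^+ (2 * m) + s).

Definition pset_add (I Q : pset) : pset :=
  fun p => exists i q, I i /\ Q q /\ p = i + q.

Definition lin_functional (sigma : {mpoly R[n]} -> R) : Prop :=
  forall (a : R) (p q : {mpoly R[n]}), sigma (a *: p + q) = a * sigma p + sigma q.

Definition in_L (A : pset) (sigma : {mpoly R[n]} -> R) : Prop :=
  lin_functional sigma /\ forall a, A a -> 0 <= sigma a.

End Defs.

From mathcomp Require Import all_boot all_order all_algebra.
From mathcomp Require Import reals.
From mathcomp Require Import mpoly.
From mathcomp Require Import ring lra.
Import Order.TTheory GRing.Theory Num.Theory.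
Set Implicit Arguments.
Unset Strict Implicit.
Unset Printing Implicit Defensive.
Local Open Scope ring_scope.

(* Call a linear functional sigma positive semidefinite when it lies in
   L(Sigma^2), i.e. sigma(s) >= 0 for every sum of squares s.
   1. Since a quadratic module contains Sigma^2, L(Q) is included in L(Sigma^2);
      moreover every sigma in L(Q) vanishes on supp Q = Q cap -Q.
   2. Cauchy-Schwarz for a positive semidefinite sigma: if sigma(f^2) = 0 then
      sigma(f g) = 0 for all g (nonnegativity of sigma((f + t g)^2) in t).
   3. Iterating 2, sigma(p^(2m)) = 0 forces sigma(p) = 0; hence if sigma
      vanishes on a set J, it vanishes on the real radical of J
      (from p^(2m) + s in J with s a sum of squares).
   4. If every sigma in L(Q) vanishes on a set J containing 0, then
      L(Q) = L(J + Q).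
   The theorem applies 4 to J = rrad(supp Q), using 1 and 3, and to
   J = rrad(I) for I inside rrad(supp Q), using 3 twice. *)

Lemma linear_term_vanishes (F : realFieldType) (a b : F) :
  0 <= b -> (forall t, 0 <= 2 * t * a + t ^+ 2 * b) -> a = 0.
Proof.
move=> b_ge0 nonneg.
have u_gt0 : 0 < b + 1 by lra.
set t := - a / (b + 1).
have tu : t * (b + 1) = - a by rewrite /t mulfVK // gt_eqF.
have scaled : 0 <= 2 * (t * (b + 1)) * a * (b + 1) + (t * (b + 1)) ^+ 2 * b.
  have -> : 2 * (t * (b + 1)) * a * (b + 1) + (t * (b + 1)) ^+ 2 * b
          = (2 * t * a + t ^+ 2 * b) * (b + 1) ^+ 2 by ring.
  by rewrite mulr_ge0 ?sqr_ge0.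
rewrite tu in scaled; move: scaled.
have -> : 2 * - a * a * (b + 1) + (- a) ^+ 2 * b = - (a ^+ 2 * (b + 2)) by ring.
rewrite oppr_ge0 => le0; apply/eqP; rewrite -sqrf_eq0 eq_le sqr_ge0 andbT.
by rewrite -(pmulr_lle0 _ (_ : 0 < b + 2)) //; lra.
Qed.

Section PositiveFunctionals.
Variables (R : realType) (n : nat).
Implicit Types (p q f g s : {mpoly R[n]}) (J Q : pset R n)
  (sigma : {mpoly R[n]} -> R).

Lemma lin_functional0 sigma : lin_functional sigma -> sigma 0 = 0.
Proof.
move=> lin; have := lin 1 0 0; rewrite scale1r addr0 mul1r => double.
by apply: (@addrI _ (sigma 0)); rewrite addr0 -double.
Qed.

Lemma lin_functionalD sigma p q :
  lin_functional sigma -> sigma (p + q) = sigma p + sigma q.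
Proof. by move=> lin; have := lin 1 p q; rewrite scale1r mul1r. Qed.

Lemma lin_functionalZ sigma (a : R) p :
  lin_functional sigma -> sigma (a *: p) = a * sigma p.
Proof.
by move=> lin; rewrite -[a *: p]addr0 lin lin_functional0 // addr0.
Qed.

Lemma lin_functionalN sigma p : lin_functional sigma -> sigma (- p) = - sigma p.
Proof. by move=> lin; rewrite -scaleN1r lin_functionalZ // mulN1r. Qed.

Lemma sos_sqr p : sos (p ^+ 2).
Proof. by exists [:: p]; rewrite big_seq1. Qed.

Lemma sos0 : sos (0 : {mpoly R[n]}).
Proof. by exists [::]; rewrite big_nil. Qed.

Lemma quadratic_module_sos Q s : quadratic_module Q -> sos s -> Q s.
Proof. by case=> Q1 _ QM sos_s; rewrite -[s]mulr1; apply: QM. Qed.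

Lemma in_L_psd Q sigma :
  quadratic_module Q -> in_L Q sigma -> in_L (@sos R n) sigma.
Proof.
by move=> QM [lin pos]; split=> // s /(quadratic_module_sos QM) /pos.
Qed.

Lemma in_L_supp Q sigma p : in_L Q sigma -> supp Q p -> sigma p = 0.
Proof.
move=> [lin pos] [/pos p_ge0 /pos]; rewrite lin_functionalN // oppr_ge0.
by move=> p_le0; apply/eqP; rewrite eq_le p_le0 p_ge0.
Qed.

(* Cauchy-Schwarz for positive semidefinite functionals: sigma(f^2) = 0
   implies sigma(f g) = 0, since t |-> sigma((f + t g)^2) is nonnegative. *)
Lemma psd_annihilates sigma f g :
  in_L (@sos R n) sigma -> sigma (f ^+ 2) = 0 -> sigma (f * g) = 0.
Proof.
move=> [lin pos] sigma_f2; apply: (linear_term_vanishes (b := sigma (g ^+ 2))).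
  exact/pos/sos_sqr.
move=> t; have := pos _ (sos_sqr (f + t *: g)).
rewrite sqrrD exprZn -scalerAr scalerMnl !lin_functionalD // !lin_functionalZ //.
by rewrite sigma_f2 add0r mulr_natl.
Qed.

(* Iterating Cauchy-Schwarz: sigma(p^(2m)) = 0 forces sigma(p) = 0.
   Downward induction: sigma((p^(m+2))^2) = 0 gives
   sigma(p^(m+2) p^m) = sigma((p^(m+1))^2) = 0. *)
Lemma psd_even_power_vanishes sigma p m :
  in_L (@sos R n) sigma -> sigma (p ^+ (2 * m)) = 0 -> sigma p = 0.
Proof.
move=> psd; rewrite mulnC exprM; case: m => [|m].
  rewrite expr0 => sigma1.
  by have := psd_annihilates p psd sigma1; rewrite mul1r.
elim: m => [|m IH] sigma_pm.
  by have := psd_annihilates 1 psd sigma_pm; rewrite mulr1.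
apply: IH; rewrite -(psd_annihilates (p ^+ m) psd sigma_pm) -!exprM -exprD.
by rewrite muln2 -addnn !addSn addnS.
Qed.

(* A positive semidefinite functional vanishing on J vanishes on its real
   radical: from sigma(p^(2m) + s) = 0 with both summands nonnegative,
   sigma(p^(2m)) = 0. *)
Lemma psd_vanishes_real_radical J sigma :
  in_L (@sos R n) sigma -> (forall p, J p -> sigma p = 0) ->
  forall p, real_radical J p -> sigma p = 0.
Proof.
move=> psd vanish p [m [s [sos_s /vanish]]]; have [lin pos] := psd.
have pm_ge0 : 0 <= sigma (p ^+ (2 * m)).
  by apply: pos; rewrite mulnC exprM; apply: sos_sqr.
have s_ge0 := pos _ sos_s; rewrite lin_functionalD // => sum0.
by apply: (psd_even_power_vanishes (m := m)) => //; lra.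
Qed.

Lemma real_radical0 J : J 0 -> real_radical J 0.
Proof.
by move=> J0; exists 1%N, 0; rewrite expr0n addr0; split=> //; apply: sos0.
Qed.

Lemma in_L_add_vanishing J Q sigma : Q 0 -> J 0 ->
  (in_L Q sigma -> forall p, J p -> sigma p = 0) ->
  in_L Q sigma <-> in_L (pset_add J Q) sigma.
Proof.
move=> Q0 J0 vanish; split=> [[lin pos] | [lin pos]]; split=> //.
  move=> _ [i [q [Ji [Qq ->]]]].
  by rewrite lin_functionalD // (vanish (conj lin pos)) // add0r; apply: pos.
by move=> q Qq; apply: pos; exists 0, q; rewrite add0r.
Qed.

End PositiveFunctionals.

Theorem mainTheorem16 (R : realType) (n : nat) (Q : pset R n) :
  quadratic_module Q ->
  (forall sigma : {mpoly R[n]} -> R,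
     in_L Q sigma <-> in_L (pset_add (real_radical (supp Q)) Q) sigma) /\
  (forall I : pset R n, is_ideal I ->
     (forall p, I p -> real_radical (supp Q) p) ->
     forall sigma : {mpoly R[n]} -> R,
       in_L Q sigma <-> in_L (pset_add (real_radical I) Q) sigma).
Proof.
move=> QM; have Q0 : Q 0 := quadratic_module_sos QM (sos0 R n).
have supp0 : supp Q 0 by split; rewrite ?oppr0.
have vanish_rrad sigma : in_L Q sigma ->
    forall p, real_radical (supp Q) p -> sigma p = 0.
  move=> LQ; apply: psd_vanishes_real_radical (in_L_psd QM LQ) _.
  by move=> p; apply: in_L_supp LQ.
split=> [sigma | I [I0 _ _] I_sub sigma].
  exact: in_L_add_vanishing Q0 (real_radical0 supp0) (vanish_rrad sigma).
apply: in_L_add_vanishing Q0 (real_radical0 I0) _ => LQ.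
apply: psd_vanishes_real_radical (in_L_psd QM LQ) _ => p /I_sub.
exact: vanish_rrad.
Qed.
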